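(* Let $G$ be a commutative group, $g\in\mathrm{Aut}(G)$, and $t_1,t_2$ fixed points of $g$. Define $f_i(x)=g(x)t_i$ for $i=1,2$. If there is $z\in G$ with $g(z)=z^{-1}t_1^{-1}t_2$, then $G(f_1)$ and $G(f_2)$ are isotopic.
   Context: Construction $G(f)$: for a commutative group $G$ (written multiplicatively) and a bijection $f:G\to G$, let $\overline{G}=\{\overline{x}:x\in G\}$ be a disjoint copy of $G$, and let $G(f)$ be $G\cup\overline{G}$ with multiplication $x*y=xy$, $x*\overline{y}=\overline{xy}$, $\overline{x}*y=\overline{xy}$, $\overline{x}*\overline{y}=f(xy)$ for $x,y\in G$. Loops $(Q_1,* )$ and $(Q_2,\circ)$ are isotopic if there are bijections $\alpha,\beta,\gamma:Q_1\to Q_2$ with $\alpha(u)\circ\beta(v)=\gamma(u*v)$ for all $u,v\in Q_1$. *)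

(* A commutative group G is modelled as a zmodType (written
   additively): xy ~ x + y, x^{-1} ~ - x, 1 ~ 0. *)
From HB Require Import structures.
From mathcomp Require Import all_boot all_order all_algebra.
Set Implicit Arguments. Unset Strict Implicit. Unset Printing Implicit Defensive.
Import GRing.Theory.
Local Open Scope ring_scope.

(* The construction G(f): carrier G + G, where inl x = x and inr x = \bar x. *)
Definition Gf (G : zmodType) (f : G -> G) (u v : G + G) : G + G :=
  match u, v with
  | inl x, inl y => inl (x + y)
  | inl x, inr y => inr (x + y)
  | inr x, inl y => inr (x + y)
  | inr x, inr y => inl (f (x + y))
  end.

Definition isotopic (Q1 Q2 : Type) (m1 : Q1 -> Q1 -> Q1) (m2 : Q2 -> Q2 -> Q2) : Prop :=
  exists (alpha beta gamma : Q1 -> Q2),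
    [/\ bijective alpha, bijective beta, bijective gamma &
        forall u v, m2 (alpha u) (beta v) = gamma (m1 u v)].

From HB Require Import structures.
From mathcomp Require Import all_boot all_order all_algebra.
Import GRing.Theory.
Local Open Scope ring_scope.

(* Translating the two copies of G separately gives bijections
   of G + G.  Take alpha = (x |-> x, \bar x |-> \bar(x - z)) and
   beta = gamma = (x |-> x + z, \bar x |-> \bar x).  The isotopy identity
   alpha u * beta v = gamma (u * v) holds trivially on the three products
   involving an element of G, and on two barred elements it reduces to
   f2 (w - z) = f1 w + z. *)

Definition shift (G : zmodType) (a b : G) (u : G + G) : G + G :=
  match u with inl x => inl (x + a) | inr x => inr (x + b) end.
Arguments shift {G}.

Lemma shift_bij (G : zmodType) (a b : G) : bijective (shift a b).
Proof. by exists (shift (- a) (- b)) => -[x|x] /=; rewrite ?addrK ?subrK. Qed.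

Lemma Gf_isotopic_of_shift (G : zmodType) (f1 f2 : G -> G) (z : G) :
  (forall w, f2 (w - z) = f1 w + z) -> isotopic (Gf f1) (Gf f2).
Proof.
move=> f12.
exists (shift 0 (- z)), (shift z 0), (shift z 0).
split; try exact: shift_bij.
move=> [x|x] [y|y] /=; rewrite ?addr0 ?addrA //.
- by rewrite addrAC subrK.
- by rewrite addrAC f12.
Qed.

Lemma additive_subr (G : zmodType) (g : G -> G) :
  (forall x y, g (x + y) = g x + g y) -> forall x y, g (x - y) = g x - g y.
Proof.
move=> g_morph x y.
have g0 : g 0 = 0 by apply: (addrI (g 0)); rewrite -g_morph !addr0.
have gN : g (- y) = - g y by apply/eqP; rewrite -subr_eq0 opprK -g_morph addNr g0.
by rewrite g_morph gN.
Qed.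

Theorem lemma6p1 (G : zmodType) (g : G -> G) (t1 t2 : G)
  (g_morph : forall x y : G, g (x + y) = g x + g y)
  (g_bij : bijective g)
  (ht1 : g t1 = t1) (ht2 : g t2 = t2)
  (hz : exists z : G, g z = - z - t1 + t2) :
  isotopic (Gf (fun x => g x + t1)) (Gf (fun x => g x + t2)).
Proof.
case: hz => z hz; apply: (@Gf_isotopic_of_shift _ _ _ z) => w.
(* g (w - z) + t2 = g w + (z + t1 - t2) + t2 = g w + t1 + z *)
by rewrite additive_subr // hz !opprD !opprK -addrA subrK addrAC addrA.
Qed.
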